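(* Let $k\ge2$ and $\ell\ge1$. If $Z'_k(\ell)$ has a strictly decreasing palindromic subsequence of length $d$ with no zero terms, then $Z'_k(\ell+2)$ has a strictly decreasing palindromic subsequence of length $kd+k-1$ with no zero terms.
   Context: For integers $k\ge2$, $L\ge1$ and $0\le x<k^L$, $\mathrm{rev}_{k,L}(x)$ is the integer whose $L$-digit (zero-padded) base-$k$ representation is the reversal of that of $x$. $Z'_k(L)$ denotes the sequence $\mathrm{rev}_{k,L}(0),\mathrm{rev}_{k,L}(1),\dots,\mathrm{rev}_{k,L}(k^L-1)$ (the radix-$k$ digit-reversal permutation; it is the stable configuration $Z_k(L)$ of labeled chip-firing on the directed $k$-ary tree with $1$ subtracted from each entry). A sequence $b_1,\dots,b_d$ of integers in $\{0,\dots,k^L-1\}$ is palindromic (with respect to $k$ and $L$) if $\mathrm{rev}_{k,L}(b_i)=b_{d+1-i}$ for all $i$. *)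

From mathcomp Require Import all_boot.
Set Implicit Arguments. Unset Strict Implicit. Unset Printing Implicit Defensive.

Definition digit (k i x : nat) : nat := (x %/ k ^ i) %% k.

(* rev_{k,L}(x): reverse the L-digit zero-padded base-k representation of x *)
Definition rev_kL (k L x : nat) : nat :=
  \sum_(0 <= i < L) digit k i x * k ^ (L.-1 - i).

Definition Zprime (k L : nat) : seq nat := [seq rev_kL k L x | x <- iota 0 (k ^ L)].

(* b_1..b_d palindromic: rev(b_i) = b_{d+1-i}, i.e. (0-indexed) rev(s_i) = s_{d-1-i} *)
Definition palindromic (k L : nat) (s : seq nat) : Prop :=
  forall i, i < size s -> rev_kL k L (nth 0 s i) = nth 0 s (size s - 1 - i).

Definition strictly_decreasing (s : seq nat) : Prop := sorted (fun a b => b < a) s.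

Definition has_good_subseq (k L d : nat) : Prop :=
  exists s : seq nat, [/\ subseq s (Zprime k L), size s = d,
    strictly_decreasing s, palindromic k L s & all (fun x => 0 < x) s].

From mathcomp Require Import all_boot zify.
Set Implicit Arguments. Unset Strict Implicit. Unset Printing Implicit Defensive.

(* Writing [s] for the given sequence of [l]-digit numbers, the new sequence has
   [k] blocks; block [j] lists the [l+2]-digit numbers [(k-1-j) x j] for [x] in [s]
   (top digit, middle digits, bottom digit), and consecutive blocks are separated
   by [(k-1-j) 0...0 (j+1)].  Reversal maps [(a x b)] to [(b rev(x) a)], so it sends
   block [j] onto block [k-1-j] read backwards and the separators onto each other,
   while the decreasing top digits keep the sequence strictly decreasing.  Finally,
   a strictly decreasing palindromic sequence [t] satisfies [t = map rev (rev t)]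
   with [rev t] increasing, hence is automatically a subsequence of [Z'_k(L)]. *)

Lemma sorted_subset_subseq (T : eqType) (lt : rel T) (u v : seq T) :
  irreflexive lt -> transitive lt -> sorted lt u -> sorted lt v ->
  {subset u <= v} -> subseq u v.
Proof.
move=> lt_irr lt_tr u_sorted v_sorted sub_uv.
have -> : u = [seq x <- v | x \in u].
  apply: (irr_sorted_eq lt_tr lt_irr) => //; first exact: sorted_filter.
  by move=> x; rewrite mem_filter andb_idr //; apply: sub_uv.
exact: filter_subseq.
Qed.

Lemma div_mod_ind (P : nat -> Prop) m : 0 < m ->
  (forall q r, r < m -> P (q * m + r)) -> forall n, P n.
Proof. by move=> m_gt0 P_qr n; rewrite (divn_eq n m); apply/P_qr/ltn_pmod. Qed.

Lemma ltn_digits m n a b : a < m -> b < n -> a * n + b < m * n.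
Proof.
move=> lt_a lt_b; apply: (@leq_trans (a.+1 * n)); first by rewrite mulSnr ltn_add2l.
by rewrite leq_mul2r lt_a orbT.
Qed.

Definition wrap_digits (k L a b x : nat) := a * k ^ L.+1 + (x * k + b).

Section Reversal.
Variable k : nat.

Lemma rev_kL0 x : rev_kL k 0 x = 0.
Proof. by rewrite /rev_kL big_geq. Qed.

Lemma rev_kLS L x : rev_kL k L.+1 x = x %% k * k ^ L + rev_kL k L (x %/ k).
Proof.
rewrite /rev_kL big_nat_recl // /digit expn0 divn1 subn0 /=; congr (_ + _).
apply: eq_bigr => i _; rewrite expnS divnMA.
by congr (_ * k ^ _); lia.
Qed.

Lemma rev_kL_zero L : rev_kL k L 0 = 0.
Proof. by elim: L => [|L IHL]; rewrite ?rev_kL0 // rev_kLS mod0n div0n IHL. Qed.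

Hypothesis k_gt0 : 0 < k.

Lemma rev_kL_lt L x : rev_kL k L x < k ^ L.
Proof.
elim: L x => [|L IHL] x; first by rewrite rev_kL0.
by rewrite rev_kLS expnS ltn_digits ?ltn_pmod.
Qed.

Lemma rev_kL_top L a x : a < k -> x < k ^ L ->
  rev_kL k L.+1 (a * k ^ L + x) = k * rev_kL k L x + a.
Proof.
elim: L a x => [|L IHL] a x lt_a lt_x.
  rewrite expn0 ltnS leqn0 in lt_x; rewrite (eqP lt_x).
  by rewrite rev_kLS !rev_kL0 modn_small ?addn0 ?muln0 ?expn0 ?muln1 ?div0n.
have lt_xk : x %/ k < k ^ L by rewrite ltn_divLR // -expnSr.
have -> : a * k ^ L.+1 + x = (a * k ^ L + x %/ k) * k + x %% k.
  by rewrite {1}(divn_eq x k) mulnDl -mulnA -expnSr addnA.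
rewrite [in RHS](divn_eq x k) rev_kLS [in RHS]rev_kLS !modnMDl !divnMDl // modn_mod.
rewrite (divn_small (ltn_pmod x k_gt0)) !addn0 IHL //.
by rewrite mulnDr mulnCA -expnS addnA.
Qed.

Lemma rev_kL_push L b x : b < k -> rev_kL k L.+1 (x * k + b) = b * k ^ L + rev_kL k L x.
Proof. by move=> lt_b; rewrite rev_kLS modnMDl divnMDl // modn_small // divn_small ?addn0. Qed.

Lemma wrap_digits_bounds L a b x : b < k -> x < k ^ L ->
  a * k ^ L.+1 <= wrap_digits k L a b x < a.+1 * k ^ L.+1.
Proof.
move=> lt_b lt_x; rewrite leq_addr ltn_digits //.
by rewrite expnSr ltn_digits.
Qed.

Lemma rev_kL_wrap L a b x : a < k -> b < k -> x < k ^ L ->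
  rev_kL k L.+2 (wrap_digits k L a b x) = wrap_digits k L b a (rev_kL k L x).
Proof.
move=> lt_a lt_b lt_x; rewrite rev_kL_top ?rev_kL_push //; last first.
  by rewrite expnSr ltn_digits.
by rewrite /wrap_digits mulnDr mulnCA -expnS [k * _]mulnC addnA.
Qed.

Lemma Zprime_lt L x : x \in Zprime k L -> x < k ^ L.
Proof. by case/mapP => y _ ->; apply: rev_kL_lt. Qed.

End Reversal.

Lemma palindromic_map_rev k L t : palindromic k L t -> map (rev_kL k L) t = rev t.
Proof.
move=> t_pal; apply: (@eq_from_nth _ 0); rewrite ?size_map ?size_rev // => i lt_i.
by rewrite (nth_map 0) // nth_rev // t_pal // subnAC subn1 subnS.
Qed.

Lemma decreasing_palindromic_subseq_Zprime k L t : 0 < k ->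
  strictly_decreasing t -> palindromic k L t -> subseq t (Zprime k L).
Proof.
move=> k_gt0 t_dec /palindromic_map_rev t_rev.
have -> : t = map (rev_kL k L) (map (rev_kL k L) t) by rewrite t_rev map_rev t_rev revK.
apply: map_subseq; apply: (sorted_subset_subseq ltnn ltn_trans).
- by rewrite t_rev rev_sorted.
- exact: iota_ltn_sorted.
- by move=> _ /mapP [y _ ->]; rewrite mem_iota rev_kL_lt.
Qed.

Section Blowup.
Variables (k l d : nat) (s : seq nat).
Hypotheses (k_gt1 : 1 < k) (s_sub : subseq s (Zprime k l)) (s_size : size s = d).
Hypotheses (s_dec : strictly_decreasing s) (s_pal : palindromic k l s).
Hypothesis s_pos : all (fun x => 0 < x) s.

Let k_gt0 : 0 < k := ltnW k_gt1.

Local Notation N := (k * d + k - 1).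

(* [blowup_entry j i] sits at position [j * d.+1 + i]; [i = d] is the separator
   after block [j], and the length [N] drops the one after the last block. *)
Definition blowup_entry j i :=
  if i < d then wrap_digits k l (k.-1 - j) j (nth 0 s i)
  else wrap_digits k l (k.-1 - j) j.+1 0.

Definition blowup := mkseq (fun p => blowup_entry (p %/ d.+1) (p %% d.+1)) N.

Lemma nth_s_bounds i : i < d -> 0 < nth 0 s i < k ^ l.
Proof.
move=> lt_i; have s_i : nth 0 s i \in s by rewrite mem_nth // s_size.
by rewrite (allP s_pos _ s_i) (Zprime_lt k_gt0 (mem_subseq s_sub s_i)).
Qed.

Lemma nth_s_decr i : i.+1 < d -> nth 0 s i.+1 < nth 0 s i.
Proof. by move=> lt_i; move/(sortedP 0): s_dec; apply; rewrite s_size. Qed.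

Lemma blowup_index j i : i < d.+1 -> j * d.+1 + i < N -> j < k /\ (i = d -> j.+1 < k).
Proof. by move=> lt_i lt_p; nia. Qed.

Lemma nth_blowup j i : i < d.+1 -> j * d.+1 + i < N ->
  nth 0 blowup (j * d.+1 + i) = blowup_entry j i.
Proof.
by move=> lt_i lt_p; rewrite nth_mkseq // divnMDl // modnMDl divn_small // modn_small // addn0.
Qed.

Lemma blowup_entry_bounds j i : j < k -> i < d.+1 -> (i = d -> j.+1 < k) ->
  (k.-1 - j) * k ^ l.+1 <= blowup_entry j i < (k - j) * k ^ l.+1.
Proof.
move=> lt_j lt_i lt_sep; have -> : k - j = (k.-1 - j).+1 by lia.
rewrite /blowup_entry; case: (ltnP i d) => [lt_id | le_di]; apply: wrap_digits_bounds; try lia.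
by case/andP: (nth_s_bounds lt_id).
Qed.

Lemma blowup_entry_gt0 j i : 0 < blowup_entry j i.
Proof.
rewrite /blowup_entry /wrap_digits; case: (ltnP i d) => [lt_id | _]; last by rewrite !addnS.
by case/andP: (nth_s_bounds lt_id); nia.
Qed.

Lemma blowup_decreasing : strictly_decreasing blowup.
Proof.
apply/(sortedP 0) => p; rewrite size_mkseq.
move: p; apply: (div_mod_ind (ltn0Sn d)) => j i lt_i lt_p.
have [lt_j lt_sep] := blowup_index lt_i (ltnW lt_p).
rewrite nth_blowup //; last lia.
case: (ltnP i d) => [lt_id | le_di].
  rewrite -addnS nth_blowup //; last lia.
  rewrite /blowup_entry lt_id /wrap_digits.
  case: (ltnP i.+1 d) => [lt_i1d | _]; rewrite ltn_add2l.
    by rewrite ltn_add2r ltn_pmul2r ?nth_s_decr //; lia.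
  by case/andP: (nth_s_bounds lt_id); nia.
have i_d : i = d by lia.
have -> : (j * d.+1 + i).+1 = j.+1 * d.+1 + 0 by rewrite i_d; lia.
have lt_p1 : j.+1 * d.+1 + 0 < N by lia.
have [lt_j1 lt_sep1] := blowup_index (ltn0Sn d) lt_p1.
rewrite nth_blowup //.
have := blowup_entry_bounds lt_j1 (ltn0Sn d) lt_sep1.
have := blowup_entry_bounds lt_j lt_i lt_sep.
have -> : k - j.+1 = k.-1 - j by lia.
lia.
Qed.

Lemma blowup_palindromic : palindromic k l.+2 blowup.
Proof.
move=> p; rewrite size_mkseq; move: p; apply: (div_mod_ind (ltn0Sn d)) => j i lt_i lt_p.
have [lt_j lt_sep] := blowup_index lt_i lt_p.
rewrite nth_blowup //.
case: (ltnP i d) => [lt_id | le_di].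
  have -> : N - 1 - (j * d.+1 + i) = (k.-1 - j) * d.+1 + (d.-1 - i) by nia.
  rewrite nth_blowup; [|lia|nia].
  have [_ lt_s_i] := andP (nth_s_bounds lt_id).
  rewrite /blowup_entry lt_id ifT; last lia.
  rewrite (rev_kL_wrap k_gt0) //; last lia.
  by rewrite s_pal s_size //; congr (wrap_digits _ _ _ _ (nth _ _ _)); lia.
have i_d : i = d by lia.
have -> : N - 1 - (j * d.+1 + i) = (k.-2 - j) * d.+1 + d by rewrite i_d; nia.
rewrite nth_blowup //; last nia.
rewrite /blowup_entry i_d ltnn (rev_kL_wrap k_gt0) ?rev_kL_zero ?expn_gt0; try lia.
by congr (wrap_digits _ _ _ _ _); lia.
Qed.

Lemma blowup_good : has_good_subseq k l.+2 (k * d + k - 1).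
Proof.
exists blowup; split.
- exact: decreasing_palindromic_subseq_Zprime k_gt0 blowup_decreasing blowup_palindromic.
- by rewrite size_mkseq.
- exact: blowup_decreasing.
- exact: blowup_palindromic.
- by apply/allP => _ /mapP [p _ ->]; apply: blowup_entry_gt0.
Qed.

End Blowup.

Theorem proposition7p2 (k l d : nat) :
  2 <= k -> 1 <= l ->
  has_good_subseq k l d -> has_good_subseq k (l + 2) (k * d + k - 1).
Proof.
move=> k_gt1 _ [s [s_sub s_size s_dec s_pal s_pos]].
by rewrite addn2; apply: blowup_good s_sub s_size s_dec s_pal s_pos.
Qed.
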